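(* Let $S$ be an inverse semigroup with zero whose semilattice of idempotents is $0$-disjunctive. Then $S$ is a Clifford semigroup if and only if $S$ contains no infinitesimals.
   Context: A semigroup is inverse if each $s$ has a unique $s^{-1}$ with $s=ss^{-1}s$, $s^{-1}=s^{-1}ss^{-1}$; its idempotents form a meet semilattice with $e\le f$ iff $e=ef$. A meet semilattice with zero is $0$-disjunctive if for all $0\ne f<e$ there exists $0\ne g\le e$ with $fg=0$. A Clifford semigroup is an inverse semigroup whose idempotents are central. An infinitesimal is a non-zero element $a$ with $a^2=0$. *)

Section SemigroupDefs.
Variables (S : Type) (mul : S -> S -> S).

Definition associative_op : Prop :=
  forall x y z : S, mul x (mul y z) = mul (mul x y) z.

Definition inverse_semigroup : Prop :=
  associative_op /\
  forall s : S, exists! t : S, s = mul (mul s t) s /\ t = mul (mul t s) t.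

Definition is_zero (z : S) : Prop :=
  forall s : S, mul z s = z /\ mul s z = z.

Definition idempotent (e : S) : Prop := mul e e = e.

Definition idem_le (e f : S) : Prop := e = mul e f.

Definition zero_disjunctive (z : S) : Prop :=
  forall e f : S, idempotent e -> idempotent f ->
    f <> z -> idem_le f e -> f <> e ->
    exists g : S, idempotent g /\ g <> z /\ idem_le g e /\ mul f g = z.

Definition clifford : Prop :=
  inverse_semigroup /\
  forall e : S, idempotent e -> forall s : S, mul e s = mul s e.

Definition infinitesimal (z a : S) : Prop := a <> z /\ mul a a = z.

End SemigroupDefs.

(* Write s' for the inverse of s. Idempotents of an inverse semigroup commute,
   and s s', s' s are idempotent. If idempotents are central and a a = 0, then
   a = (a a') a = a (a a') = 0. Conversely, if s s' is not below s' s, then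
   0-disjunctivity yields a nonzero idempotent g <= s s' with g (s' s) = 0, and
   g s is an infinitesimal: (g s) (g s) = g s ((s' s) g) s = 0. So without
   infinitesimals s s' = s' s for every s. Applied to s e, whose inverse is
   e s', this gives s e s' = e s' s, from which e s = s e follows. *)

From Stdlib Require Import Classical.

Section InverseSemigroup.
Variables (S : Type) (mul : S -> S -> S).
Hypothesis inverse_semigroup_S : inverse_semigroup S mul.

Local Infix "*" := mul.

Definition inverse_pair (s t : S) : Prop := s = s * t * s /\ t = t * s * t.

Lemma mul_assoc (x y u : S) : x * (y * u) = x * y * u.
Proof. exact (proj1 inverse_semigroup_S x y u). Qed.

Lemma inverse_pair_sym (s t : S) : inverse_pair s t -> inverse_pair t s.
Proof. now intros [H1 H2]. Qed.

Lemma inverse_exists (s : S) : exists t, inverse_pair s t.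
Proof.
  destruct (proj2 inverse_semigroup_S s) as [t [Ht _]].
  now exists t.
Qed.

Lemma inverse_unique (s t u : S) : inverse_pair s t -> inverse_pair s u -> t = u.
Proof.
  intros Ht Hu.
  destruct (proj2 inverse_semigroup_S s) as [x [_ U]].
  now rewrite <- (U t Ht), <- (U u Hu).
Qed.

Lemma idempotent_inverse_pair (e : S) : idempotent S mul e -> inverse_pair e e.
Proof. intros He; unfold idempotent in He; split; now rewrite !He. Qed.

Lemma idempotent_mul_inverse (s t : S) :
  inverse_pair s t -> idempotent S mul (s * t).
Proof. intros [H1 _]; unfold idempotent; now rewrite mul_assoc, <- H1. Qed.

Lemma mul_idempotent_r (x e : S) : idempotent S mul e -> x * e * e = x * e.
Proof. intros He; now rewrite <- mul_assoc, He. Qed.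

(* [f x e] is a second inverse of [e f], so [x = f x e], which is idempotent
   and therefore its own inverse; uniqueness then forces [e f = x]. *)
Lemma idempotent_mul (e f : S) :
  idempotent S mul e -> idempotent S mul f -> idempotent S mul (e * f).
Proof.
  intros He Hf.
  destruct (inverse_exists (e * f)) as [x [H1 H2]].
  assert (Hx : x = f * x * e).
  { apply (inverse_unique (e * f)); [easy | split].
    - rewrite H1 at 1; rewrite !mul_assoc, !mul_idempotent_r by assumption; easy.
    - rewrite H2 at 1; rewrite !mul_assoc, !mul_idempotent_r by assumption; easy. }
  assert (Hxx : idempotent S mul x).
  { unfold idempotent; rewrite Hx at 1 2.
    transitivity (f * (x * (e * f) * x) * e); [now rewrite !mul_assoc|].
    now rewrite <- H2, <- Hx. }
  unfold idempotent.
  rewrite (inverse_unique x (e * f) x (conj H2 H1) (idempotent_inverse_pair x Hxx)).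
  exact Hxx.
Qed.

Lemma idempotent_comm (e f : S) :
  idempotent S mul e -> idempotent S mul f -> e * f = f * e.
Proof.
  intros He Hf.
  pose proof (idempotent_mul e f He Hf) as Hef.
  pose proof (idempotent_mul f e Hf He) as Hfe.
  apply (inverse_unique (e * f)); [now apply idempotent_inverse_pair | split].
  - rewrite <- Hef at 1; rewrite !mul_assoc, !mul_idempotent_r by assumption; easy.
  - rewrite <- Hfe at 1; rewrite !mul_assoc, !mul_idempotent_r by assumption; easy.
Qed.

Lemma inverse_pair_mul_idempotent (s t e : S) :
  inverse_pair s t -> idempotent S mul e -> inverse_pair (s * e) (e * t).
Proof.
  intros [H1 H2] He.
  pose proof (idempotent_mul_inverse t s (conj H2 H1)) as Hts.
  split.
  - symmetry; transitivity (s * (e * (t * s)) * e).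
    { now rewrite !mul_assoc, mul_idempotent_r. }
    rewrite (idempotent_comm e (t * s)) by assumption.
    now rewrite !mul_assoc, !mul_idempotent_r, <- H1 by assumption.
  - symmetry; transitivity (e * (t * s * e) * t).
    { now rewrite !mul_assoc, mul_idempotent_r. }
    rewrite <- (idempotent_comm e (t * s)) by assumption.
    rewrite !mul_assoc, He, <- (mul_assoc e t s), <- (mul_assoc e (t * s)).
    now rewrite <- H2.
Qed.

Section Zero.
Variable z : S.
Hypothesis zero_z : is_zero S mul z.

Lemma clifford_no_infinitesimal :
  clifford S mul -> ~ exists a, infinitesimal S mul z a.
Proof.
  intros [_ central] [a [Ha Haa]].
  destruct (inverse_exists a) as [t Hat].
  apply Ha; rewrite (proj1 Hat).
  rewrite (central _ (idempotent_mul_inverse a t Hat) a), mul_assoc, Haa.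
  apply zero_z.
Qed.

Lemma infinitesimal_of_orthogonal_idempotent (s t g : S) :
  inverse_pair s t -> idempotent S mul g -> g <> z ->
  idem_le S mul g (s * t) -> g * (t * s) = z ->
  infinitesimal S mul z (g * s).
Proof.
  intros [H1 H2] Hg Hgz Hle Horth.
  split.
  - intros Hgs; apply Hgz.
    rewrite Hle, mul_assoc, Hgs; apply zero_z.
  - assert (Hs : s = s * (t * s)) by now rewrite mul_assoc.
    transitivity (g * s * (t * s * g) * s).
    { rewrite Hs at 1; now rewrite !mul_assoc. }
    pose proof (idempotent_mul_inverse t s (conj H2 H1)) as Hts.
    rewrite (idempotent_comm (t * s) g), Horth by assumption.
    now rewrite (proj2 (zero_z _)), (proj1 (zero_z _)).
Qed.

Hypothesis disjunctive_z : zero_disjunctive S mul z.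

Lemma zero_disjunctive_orthogonal (e f : S) :
  idempotent S mul e -> idempotent S mul f -> e <> e * f ->
  exists g, idempotent S mul g /\ g <> z /\ idem_le S mul g e /\ g * f = z.
Proof.
  intros He Hf Hne.
  pose proof (idempotent_mul e f He Hf) as Hef.
  destruct (classic (e * f = z)) as [Hz | Hnz].
  - exists e; repeat split; [easy | congruence | | easy].
    unfold idem_le; now rewrite He.
  - assert (Hle : idem_le S mul (e * f) e).
    { unfold idem_le; now rewrite <- mul_assoc, (idempotent_comm f e), mul_assoc, He. }
    destruct (disjunctive_z e (e * f) He Hef Hnz Hle (not_eq_sym Hne))
      as [g [Hg [Hgz [Hge Hgef]]]].
    exists g; repeat split; try easy.
    now rewrite Hge, <- mul_assoc, (idempotent_comm g (e * f)).
Qed.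

Section NoInfinitesimal.
Hypothesis no_infinitesimal : ~ exists a, infinitesimal S mul z a.

Lemma range_le_domain (s t : S) :
  inverse_pair s t -> idem_le S mul (s * t) (t * s).
Proof.
  intros Hst.
  pose proof (idempotent_mul_inverse s t Hst) as He.
  pose proof (idempotent_mul_inverse t s (inverse_pair_sym s t Hst)) as Hf.
  apply NNPP; intros Hne.
  destruct (zero_disjunctive_orthogonal (s * t) (t * s) He Hf Hne)
    as [g [Hg [Hgz [Hle Horth]]]].
  apply no_infinitesimal; exists (g * s).
  now apply (infinitesimal_of_orthogonal_idempotent s t g).
Qed.

Lemma range_eq_domain (s t : S) : inverse_pair s t -> s * t = t * s.
Proof.
  intros Hst.
  pose proof (inverse_pair_sym s t Hst) as Hts.
  rewrite (range_le_domain s t Hst), (idempotent_comm (s * t) (t * s)),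
    <- (range_le_domain t s Hts);
    auto using idempotent_mul_inverse.
Qed.

Lemma idempotent_central (e s : S) : idempotent S mul e -> e * s = s * e.
Proof.
  intros He.
  destruct (inverse_exists s) as [t Hst].
  pose proof Hst as [H1 H2].
  pose proof (idempotent_mul_inverse t s (conj H2 H1)) as Hf.
  assert (Hconj : s * e * t = e * (t * s)).
  { transitivity (s * e * (e * t)); [now rewrite mul_assoc, mul_idempotent_r|].
    rewrite (range_eq_domain (s * e) (e * t))
      by now apply inverse_pair_mul_idempotent.
    transitivity (e * (t * s) * e); [now rewrite !mul_assoc|].
    now rewrite <- mul_assoc, (idempotent_comm (t * s) e), mul_assoc, He. }
  transitivity (e * (t * s) * s).
  { now rewrite <- (range_eq_domain s t Hst), <- mul_assoc, <- H1. }
  rewrite <- Hconj, <- mul_assoc, <- (mul_assoc s e), (idempotent_comm e (t * s)) by easy.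
  now rewrite !mul_assoc, <- H1.
Qed.

Lemma no_infinitesimal_clifford : clifford S mul.
Proof.
  split; [exact inverse_semigroup_S |].
  intros e He s; now apply idempotent_central.
Qed.
End NoInfinitesimal.
End Zero.
End InverseSemigroup.

Theorem mainTheorem17 (S : Type) (mul : S -> S -> S) (z : S) :
  inverse_semigroup S mul ->
  is_zero S mul z ->
  zero_disjunctive S mul z ->
  (clifford S mul <-> ~ (exists a : S, infinitesimal S mul z a)).
Proof.
  intros HS Hz HD; split.
  - exact (clifford_no_infinitesimal S mul HS z Hz).
  - exact (no_infinitesimal_clifford S mul HS z Hz HD).
Qed.
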